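(* Let $n\ge 1$ be an integer, $x>0$, and $0<v<nx$. Put $m\equiv\lfloor v/x\rfloor$, $r\equiv v-mx$ and $y\equiv x-r$. Then every vector in the convex hull $\mathrm{Conv}(\Gamma(m,y,r))$ is an optimal solution of \[ \min\; f(\boldsymbol v)\quad\text{s.t.}\quad \boldsymbol v\in\Lambda(v). \]
   Context: For $v>0$, $\Lambda(v)$ is the set of vectors in $\mathbb{R}^n$ with nonnegative coordinates summing to $v$. For $\boldsymbol v=(v_1,\dots,v_n)$, $f(\boldsymbol v)\equiv\sum_{1\le l\le k\le n}\bigl(x-\sum_{i=l}^k v_i\bigr)^+$, where $a^+=\max\{a,0\}$. For integers $0\le m<n$ and reals $y,r\ge0$, let $\Delta_y\equiv\lfloor\frac{n+1}{m+1}\rfloor$ and $\Delta_r\equiv\lfloor\frac{n+1}{m+2}\rfloor$. The set $\Gamma(m,y,r)$ (''duo-equidistant vectors'') consists of all $\boldsymbol v=\boldsymbol v_y+\boldsymbol v_r\in\mathbb{R}^n$ where: $\boldsymbol v_y$ has $i$-th coordinate $y$ if $i\in\{\sum_{k=1}^{j}\Delta_{y,k}: 1\le j\le m\}$ and $0$ otherwise, for some integers $\Delta_{y,1},\dots,\Delta_{y,m+1}\in\{\Delta_y,\Delta_y+1\}$ with $\sum_{k=1}^{m+1}\Delta_{y,k}=n+1$; and $\boldsymbol v_r$ has $i$-th coordinate $r$ if $i\in\{\sum_{k=1}^{j}\Delta_{r,k}: 1\le j\le m+1\}$ and $0$ otherwise, for some integers $\Delta_{r,1},\dots,\Delta_{r,m+2}\in\{\Delta_r,\Delta_r+1\}$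 with $\sum_{k=1}^{m+2}\Delta_{r,k}=n+1$. *)

From mathcomp Require Import all_boot all_order all_algebra.
From mathcomp Require Import reals.
Set Implicit Arguments. Unset Strict Implicit. Unset Printing Implicit Defensive.
Import Order.TTheory GRing.Theory Num.Theory.
Local Open Scope ring_scope.

Section Defs.
Variable R : realType.

(* Vectors of R^n are functions 'I_n -> R; coordinate i : 'I_n is the
   paper's coordinate i+1. *)

Definition Lambda (n : nat) (v : R) (w : 'I_n -> R) : Prop :=
  (forall i, 0 <= w i) /\ \sum_(i < n) w i = v.

Definition pos_part (a : R) : R := Num.max a 0.

Definition fobj (n : nat) (x : R) (w : 'I_n -> R) : R :=
  \sum_(l < n) \sum_(k < n | (l <= k)%N)
     pos_part (x - \sum_(i < n | (l <= i)%N && (i <= k)%N) w i).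

(* Equidistant positions: with gaps d_1..d_{p+1} (here d 0 .. d p), all in
   {D, D+1} with total n+1, the marked (1-based) positions are the partial
   sums d_1+...+d_j, 1 <= j <= p.  [marked n p d i] says that the 1-based
   coordinate i+1 of i : 'I_n is one of them. *)
Definition valid_gaps (n p : nat) (d : nat -> nat) : Prop :=
  let D := (n.+1 %/ p.+1)%N in
  (forall k, (k < p.+1)%N -> d k = D \/ d k = D.+1) /\
  (\sum_(0 <= k < p.+1) d k)%N = n.+1.

Definition marked (n p : nat) (d : nat -> nat) (i : 'I_n) : bool :=
  [exists j : 'I_p.+1, (1 <= j)%N && ((\sum_(0 <= k < j) d k)%N == i.+1)].

Definition marked_vec (n p : nat) (d : nat -> nat) (a : R) : 'I_n -> R :=
  fun i => if marked p d i then a else 0.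

Definition Gamma (n m : nat) (y r : R) (w : 'I_n -> R) : Prop :=
  exists dy dr : nat -> nat,
    [/\ valid_gaps n m dy, valid_gaps n m.+1 dr &
        forall i, w i = marked_vec m dy y i + marked_vec m.+1 dr r i].

Definition conv_hull (n : nat) (S : ('I_n -> R) -> Prop) (w : 'I_n -> R) : Prop :=
  exists (k : nat) (lam : 'I_k -> R) (p : 'I_k -> 'I_n -> R),
    [/\ forall j, 0 <= lam j, \sum_(j < k) lam j = 1, forall j, S (p j) &
        forall i, w i = \sum_(j < k) lam j * p j i].

End Defs.

(* With P_a the partial sums of w, f(w) sums (x - (P_k' - P_l))^+ over l < k'.  That
   quantity is the measure of the thresholds t in (0, x] for which P_l - t and P_k' - t
   fall in the same cell of the grid xZ, so f(w) integrates over t the number of pairs of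
   partial sums sharing a cell.  For v = m x + r the n + 1 shifted partial sums occupy at
   most m + 2 cells when t <= r and m + 1 cells when t > r, and pairs sharing a cell are
   fewest when the cells are as balanced as possible; integrating gives a lower bound
   on f over Lambda(v).  An equidistant vector with marks of height x has balanced cells
   and attains the bound; every element of Gamma(m, y, r) is the convex combination with
   weights y/x and r/x of two such vectors, and f is convex. *)

From mathcomp Require Import all_boot all_order all_algebra.
From mathcomp Require Import reals.
From mathcomp Require Import zify ring lra.
Set Implicit Arguments. Unset Strict Implicit.

Section LevelSets.
Variable c : nat -> nat.

Definition eq_pairs (n : nat) : nat :=
  \sum_(l < n) \sum_(k < n | l <= k) (c l == c k.+1).

Definition level_size (n j : nat) : nat := \sum_(a < n.+1) (c a == j).

Lemma eq_pairsS n : eq_pairs n.+1 = eq_pairs n + level_size n (c n.+1).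
Proof.
rewrite /eq_pairs /level_size.
rewrite (eq_bigr (fun l : 'I_n.+1 => \sum_(k < n | l <= k) (c l == c k.+1)
                                    + (c l == c n.+1))); last first.
  by move=> l _; rewrite big_mkcond big_ord_recr /= -big_mkcond -ltnS ltn_ord.
rewrite big_split /=; congr (_ + _).
rewrite big_ord_recr /= [X in _ + X]big1 ?addn0 // => k.
by rewrite leqNgt ltn_ord.
Qed.

Lemma level_sizeS n j : level_size n.+1 j = level_size n j + (c n.+1 == j).
Proof. by rewrite /level_size big_ord_recr. Qed.

Lemma sum_eq_ord K j (F : nat -> nat) : j < K ->
  \sum_(i < K) (j == i) * F i = F j.
Proof.
move=> jK; rewrite (bigD1 (Ordinal jK)) //= eqxx mul1n big1 ?addn0 // => i.
by rewrite -val_eqE /= eq_sym => /negbTE ->.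
Qed.

Lemma sum_eq_ord1 K j : j < K -> \sum_(i < K) (j == i) = 1.
Proof.
move=> jK; rewrite -(sum_eq_ord (fun _ => 1) jK).
by apply: eq_bigr => i _; rewrite muln1.
Qed.

Lemma sum_level_size n K : (forall a, a <= n -> c a < K) ->
  \sum_(j < K) level_size n j = n.+1.
Proof.
move=> c_lt; rewrite /level_size exchange_big /= (eq_bigr (fun _ => 1)) => [|a _].
  by rewrite sum_nat_const card_ord muln1.
exact/sum_eq_ord1/c_lt/ltnSE.
Qed.

(* The squared level sizes count ordered pairs of positions on a common level. *)
Lemma sum_level_size_sq n K : (forall a, a <= n -> c a < K) ->
  2 * eq_pairs n + n.+1 = \sum_(j < K) level_size n j ^ 2.
Proof.
elim: n => [|n IH] lt_cK.
  rewrite /eq_pairs big_ord0 muln0 add0n -{1}(sum_eq_ord1 (lt_cK 0 (leqnn 0))).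
  by apply: eq_bigr => j _; rewrite /level_size big_ord1; case: (_ == _).
have lt_cnK : c n.+1 < K by exact: lt_cK.
rewrite eq_pairsS (eq_bigr (fun j : 'I_K => level_size n j ^ 2 +
   2 * ((c n.+1 == j) * level_size n j) + (c n.+1 == j))); last first.
  by move=> j _; rewrite level_sizeS; case: (_ == _); lia.
rewrite !big_split /= (sum_eq_ord _ lt_cnK) big1_eq sum_eq_ord1 //.
rewrite -IH => [|a an]; [lia | exact/lt_cK/ltnW].
Qed.

End LevelSets.

Lemma sqr_ge_affine a q : (2 * q + 1) * a <= a ^ 2 + q * (q + 1).
Proof.
have [aq|qa] := leqP a q.
  have [t ->] : exists t, q = a + t by exists (q - a); lia.
  nia.
have [t ->] : exists t, a = q + 1 + t by exists (a - q - 1); lia.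
nia.
Qed.

Lemma eq_pairs_lower c n K q : (forall a, a <= n -> c a < K) ->
  2 * (q * n.+1) <= 2 * eq_pairs c n + K * (q * (q + 1)).
Proof.
move=> c_lt; have := sum_level_size_sq c_lt.
have : \sum_(j < K) (2 * q + 1) * level_size c n j <=
       \sum_(j < K) (level_size c n j ^ 2 + q * (q + 1)).
  by apply: leq_sum => j _; exact: sqr_ge_affine.
rewrite big_split /= -big_distrr /= sum_level_size // sum_nat_const card_ord; lia.
Qed.

Lemma eq_pairs_balanced c n K q : (forall a, a <= n -> c a < K) ->
  (forall j, j < K -> level_size c n j = q \/ level_size c n j = q.+1) ->
  2 * (q * n.+1) = 2 * eq_pairs c n + K * (q * (q + 1)).
Proof.
move=> c_lt balanced; have := sum_level_size_sq c_lt.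
have : \sum_(j < K) (2 * q + 1) * level_size c n j =
       \sum_(j < K) (level_size c n j ^ 2 + q * (q + 1)).
  by apply: eq_bigr => j _; case: (balanced j (ltn_ord j)) => ->; lia.
rewrite big_split /= -big_distrr /= sum_level_size // sum_nat_const card_ord; lia.
Qed.

Lemma sum_ord_itv N lo hi : lo <= hi ->
  \sum_(j < N) ((lo <= j) && (j < hi)) = minn hi N - minn lo N.
Proof.
move=> lo_hi; elim: N => [|N IH]; first by rewrite big_ord0; lia.
by rewrite big_ord_recr /= IH; case: (leqP lo N); case: (ltnP N hi); lia.
Qed.

Lemma eq_of_leq_sum K (f g : nat -> nat) : (forall c, c < K -> g c <= f c) ->
  \sum_(c < K) f c = \sum_(c < K) g c -> forall c, c < K -> f c = g c.
Proof.
move=> le_gf eq_sum c lt_cK.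
have /leqif_sum[_] := fun (i : 'I_K) (_ : true) => leqif_eq (le_gf i (ltn_ord i)).
by rewrite eq_sum eqxx => /esym/forallP/(_ (Ordinal lt_cK))/eqP.
Qed.

Section EquidistantMarks.
Variables (n p : nat) (d : nat -> nat).
Hypotheses (gaps : valid_gaps n p d) (p_le_n : p <= n).

Definition gap_sum j := \sum_(0 <= k < j) d k.
Definition mark_rank a := \sum_(j < p.+1 | 1 <= j) (gap_sum j <= a).
Definition marks_before a := \sum_(i < n) ((i < a) && marked p d i).

Lemma gap_pos k : k < p.+1 -> 0 < d k.
Proof.
have [gapsD _] := gaps; have D_gt0 : 0 < n.+1 %/ p.+1 by rewrite divn_gt0.
by move=> /gapsD[] ->; lia.
Qed.

Lemma gap_sumS j : gap_sum j.+1 = gap_sum j + d j.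
Proof. by rewrite /gap_sum big_nat_recr. Qed.

Lemma gap_sum0 : gap_sum 0 = 0.
Proof. by rewrite /gap_sum big_geq. Qed.

Lemma gap_sum_top : gap_sum p.+1 = n.+1.
Proof. by rewrite /gap_sum; have [_ ->] := gaps. Qed.

Lemma leq_gap_sum : {homo gap_sum : j j' / j <= j'}.
Proof. by apply: homo_leq => // [j k l|j]; [exact: leq_trans | rewrite gap_sumS leq_addr]. Qed.

Lemma ltn_gap_sum j j' : j < j' <= p.+1 -> gap_sum j < gap_sum j'.
Proof.
move=> /andP[lt_jj' le_j'p]; apply: leq_trans (leq_gap_sum lt_jj').
by rewrite gap_sumS -addn1 leq_add2l gap_pos //; lia.
Qed.

Lemma mark_rank_itv c a : c <= p -> gap_sum c <= a < gap_sum c.+1 -> mark_rank a = c.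
Proof.
move=> le_cp /andP[le_ca lt_ac]; rewrite /mark_rank big_mkcond /=.
rewrite (eq_bigr (fun j : 'I_p.+1 => ((1 <= j) && (j < c.+1) : nat))) => [|j _].
  by rewrite sum_ord_itv //; lia.
case: (1 <= j) => //=; rewrite ltnS; case: (leqP j c) => [le_jc|lt_cj].
  by rewrite (leq_trans (leq_gap_sum le_jc)).
by rewrite leqNgt (leq_trans lt_ac) ?leq_gap_sum.
Qed.

Lemma mark_rank_le a : mark_rank a <= p.
Proof.
apply: (@leq_trans (\sum_(j < p.+1) ((1 <= j) && (j < p.+1)))).
  rewrite /mark_rank big_mkcond /=; apply: leq_sum => j _.
  by rewrite ltn_ord andbT; case: (1 <= j) => //; exact: leq_b1.
by rewrite sum_ord_itv //; lia.
Qed.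

Lemma gap_sum_inj j j' : j <= p.+1 -> j' <= p.+1 -> gap_sum j = gap_sum j' -> j = j'.
Proof.
move=> le_jp le_j'p eq_gs; case: (ltngtP j j') => // [lt_jj'|lt_j'j].
  by have := @ltn_gap_sum j j'; rewrite lt_jj' le_j'p eq_gs ltnn => /(_ isT).
by have := @ltn_gap_sum j' j; rewrite lt_j'j le_jp eq_gs ltnn => /(_ isT).
Qed.

Lemma mark_rankS a (lt_an : a < n) :
  mark_rank a.+1 = mark_rank a + marked p d (Ordinal lt_an).
Proof.
have -> : mark_rank a.+1 = mark_rank a + \sum_(j < p.+1 | 1 <= j) (gap_sum j == a.+1).
  rewrite /mark_rank -big_split /=; apply: eq_bigr => j _.
  by rewrite [in LHS]leq_eqVlt ltnS; case: eqP => [->|_]; rewrite ?ltnn ?addn0.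
congr (_ + _); rewrite /marked; case: existsP => [[j0 /andP[ge1_j0 /eqP gs_j0]]|no_mark].
  have {}gs_j0 : gap_sum j0 = a.+1 by [].
  rewrite (bigD1 j0) //= gs_j0 eqxx big1 ?addn0 // => j /andP[_ neq_jj0].
  apply/eqP; rewrite eqb0; apply: contra neq_jj0 => /eqP gs_j.
  by apply/eqP/val_inj/gap_sum_inj; rewrite ?gs_j ?gs_j0 //; exact/ltnW/ltn_ord.
apply: big1 => j ge1_j; apply/eqP; rewrite eqb0; apply: contra_not_neq no_mark => gs_j.
by exists j; rewrite ge1_j; apply/eqP.
Qed.

Lemma marks_beforeS a (lt_an : a < n) :
  marks_before a.+1 = marks_before a + marked p d (Ordinal lt_an).
Proof.
rewrite /marks_before.
have -> : \sum_(i < n) ((i < a.+1) && marked p d i) =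
    \sum_(i < n) ((i < a) && marked p d i) + \sum_(i < n) ((i == a :> nat) && marked p d i).
  rewrite -big_split /=; apply: eq_bigr => i _.
  by rewrite ltnS leq_eqVlt; case: (ltngtP i a) => //=; case: marked.
congr (_ + _); rewrite (bigD1 (Ordinal lt_an)) //= eqxx /= big1 ?addn0 // => i.
by rewrite -val_eqE /= => /negbTE ->.
Qed.

Lemma marks_before_rank a : a <= n -> marks_before a = mark_rank a.
Proof.
elim: a => [_|a IH lt_an]; last first.
  by rewrite (marks_beforeS lt_an) (mark_rankS lt_an) IH // ltnW.
rewrite /marks_before /mark_rank !big1 // => j ge1_j.
suff : 0 < gap_sum j by case: (gap_sum j).
by apply: leq_trans (leq_gap_sum ge1_j); rewrite gap_sumS gap_sum0 gap_pos.
Qed.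

Lemma leq_marks_before : {homo marks_before : a b / a <= b}.
Proof.
move=> a b le_ab; apply: leq_sum => i _.
by case: (ltnP i a) => //= lt_ia; rewrite (leq_trans lt_ia le_ab).
Qed.

Lemma marks_before_lt a : a <= n -> marks_before a < p.+1.
Proof. by move=> le_an; rewrite marks_before_rank // ltnS mark_rank_le. Qed.

Lemma marks_before_n : marks_before n = p.
Proof.
rewrite marks_before_rank // (@mark_rank_itv p) // gap_sum_top ltnSn andbT.
by rewrite -ltnS -gap_sum_top; apply: ltn_gap_sum; rewrite ltnSn /=.
Qed.

(* The positions a <= n with [marks_before a = c] form the c-th gap. *)
Lemma level_size_marks_before c : c < p.+1 -> level_size marks_before n c = d c.
Proof.
apply: eq_of_leq_sum => [c0 lt_c0p|]; last first.
  by rewrite (sum_level_size marks_before_lt) -gap_sum_top /gap_sum big_mkord.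
have le_gs : gap_sum c0.+1 <= n.+1 by rewrite -gap_sum_top leq_gap_sum.
rewrite (_ : d c0 = \sum_(a < n.+1) ((gap_sum c0 <= a) && (a < gap_sum c0.+1))).
  apply: leq_sum => a _; case: andP => // -[le_gs_a lt_a_gs].
  rewrite marks_before_rank ?(@mark_rank_itv c0) ?lt_a_gs ?andbT //; first lia.
  by rewrite -ltnS (leq_trans lt_a_gs).
by move: le_gs; rewrite sum_ord_itv ?leq_gap_sum // gap_sumS; lia.
Qed.

End EquidistantMarks.

Import Order.TTheory GRing.Theory Num.Theory.
Local Open Scope ring_scope.

Section MinEqPairs.
Variable R : realFieldType.

(* The value of [eq_pairs] when N positions are spread over K levels of sizes q and q + 1. *)
Definition min_eq_pairs (N K q : nat) : R := (q * N)%:R - (K * (q * (q + 1)))%:R / 2.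

Lemma min_eq_pairs_le c n K q : (forall a, (a <= n)%N -> (c a < K)%N) ->
  min_eq_pairs n.+1 K q <= (eq_pairs c n)%:R.
Proof.
move=> /(eq_pairs_lower q); rewrite /min_eq_pairs.
move: (q * n.+1)%N (K * _)%N (eq_pairs c n) => A B P.
by rewrite -(ler_nat R) natrD !natrM; lra.
Qed.

Lemma min_eq_pairsE c n K q : (forall a, (a <= n)%N -> (c a < K)%N) ->
  (forall j, (j < K)%N -> level_size c n j = q \/ level_size c n j = q.+1) ->
  min_eq_pairs n.+1 K q = (eq_pairs c n)%:R.
Proof.
move=> c_lt /(eq_pairs_balanced c_lt); rewrite /min_eq_pairs.
move: (q * n.+1)%N (K * _)%N (eq_pairs c n) => A B P /(congr1 (fun k => k%:R : R)).
by rewrite /= natrD !natrM; lra.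
Qed.

End MinEqPairs.

Definition indicator {R : pzSemiRingType} (b : bool) : R := b%:R.

Lemma pos_part_id (R : realType) (a : R) : 0 <= a -> pos_part a = a.
Proof. by move=> a_ge0; rewrite /pos_part max_l. Qed.

Lemma pos_part_eq0 (R : realType) (a : R) : a <= 0 -> pos_part a = 0.
Proof. by move=> a_le0; rewrite /pos_part max_r. Qed.

Section StepIntegral.
Variables (R : realFieldType) (U : seq R).

Definition prev_point (t : R) : R := \big[Num.max/0]_(s <- U | s < t) s.

(* Integral over [0, max U] of a function taken to be constant, equal to its
   value at t, on each interval (prev_point t, t] between consecutive points of U. *)
Definition stepint (F : R -> R) : R := \sum_(t <- U | 0 < t) (t - prev_point t) * F t.

Lemma prev_point_lt t : 0 < t -> prev_point t < t.
Proof. by move=> t_gt0; apply: bigmax_lt. Qed.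

Lemma prev_point_ge s t : s \in U -> s < t -> s <= prev_point t.
Proof. exact: le_bigmax_seq. Qed.

Lemma prev_point_mem t : 0 \in U -> prev_point t \in U.
Proof.
move=> U0; rewrite /prev_point big_seq_cond; elim/big_rec: _ => // s a /andP[sU _] aU.
by case: (leP s a).
Qed.

Lemma eq_stepint F G : (forall t, t \in U -> 0 < t -> F t = G t) ->
  stepint F = stepint G.
Proof.
move=> eq_FG; rewrite /stepint big_seq_cond [in RHS]big_seq_cond.
by apply: eq_bigr => t /andP[tU t_gt0]; rewrite eq_FG.
Qed.

Lemma ler_stepint F G : (forall t, t \in U -> 0 < t -> F t <= G t) ->
  stepint F <= stepint G.
Proof.
move=> le_FG; rewrite /stepint big_seq_cond [X in _ <= X]big_seq_cond; apply: ler_sum => t /andP[tU t_gt0].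
by rewrite ler_wpM2l ?le_FG // subr_ge0 ltW // prev_point_lt.
Qed.

Lemma stepintD F G : stepint (fun t => F t + G t) = stepint F + stepint G.
Proof. by rewrite /stepint -big_split; apply: eq_bigr => t _; rewrite mulrDr. Qed.

Lemma stepintB F G : stepint (fun t => F t - G t) = stepint F - stepint G.
Proof. by rewrite /stepint -sumrB; apply: eq_bigr => t _; rewrite mulrBr. Qed.

Lemma stepintZ c F : stepint (fun t => c * F t) = c * stepint F.
Proof. by rewrite /stepint mulr_sumr; apply: eq_bigr => t _; rewrite mulrCA. Qed.

Lemma stepint0 : stepint (fun=> 0) = 0.
Proof. by rewrite /stepint big1 // => t _; rewrite mulr0. Qed.

Lemma stepint_sum (I : finType) (P : pred I) (F : I -> R -> R) :
  stepint (fun t => \sum_(i | P i) F i t) = \sum_(i | P i) stepint (F i).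
Proof. by rewrite /stepint exchange_big; apply: eq_bigr => t _; rewrite mulr_sumr. Qed.

(* The step integral of [t <= b] telescopes along the points of U below b. *)
Lemma stepint_le b : uniq U -> 0 \in U -> (forall t, t \in U -> 0 <= t) -> b \in U ->
  stepint (fun t => indicator (t <= b)) = b.
Proof.
move=> U_uniq U0 U_ge0; have [k] := ubnP (count (< b) U); elim: k b => // k IH b.
rewrite ltnS => cnt_b bU; have [b_le0|b_gt0] := leP b 0.
  have -> : b = 0 by apply/le_anti; rewrite b_le0 U_ge0.
  by rewrite (@eq_stepint _ (fun=> 0)) ?stepint0 // => t _ t_gt0; rewrite /indicator lt_geF.
have prev_lt_b := prev_point_lt b_gt0.
rewrite (@eq_stepint _ (fun t => indicator (t == b) + indicator (t <= prev_point b))); last first.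
  move=> t tU _; rewrite /indicator; case: (ltgtP t b) => [lt_tb|lt_bt|->]; rewrite ?add0r ?addr0.
  - by rewrite prev_point_ge.
  - by rewrite lt_geF // (lt_trans prev_lt_b).
  - by rewrite (lt_geF prev_lt_b) addr0.
have prev_bU : prev_point b \in U by exact: prev_point_mem.
have lt_count : (count (< prev_point b) U < count (< b) U)%N.
  apply: (@leq_trans (count (< prev_point b) U + count (pred1 (prev_point b)) U)).
    by rewrite -{1}[count _ _]addn0 ltn_add2l -has_count has_pred1.
  rewrite -count_predUI (@eq_count _ (predI _ _) pred0) ?count_pred0 ?addn0 => [|t /=].
    by apply: sub_count => t /= /orP[/lt_trans->|/eqP->].
  by case: eqP => [->|]; rewrite ?ltxx ?andbF.
rewrite stepintD IH //; last exact: leq_trans lt_count cnt_b.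
suff -> : stepint (fun t => indicator (t == b)) = b - prev_point b by rewrite subrK.
rewrite /stepint /indicator big_mkcond (bigD1_seq b) //= b_gt0 eqxx mulr1 big1 ?addr0 // => t.
by move=> /negbTE t_neq_b; case: ifP; rewrite ?t_neq_b ?mulr0.
Qed.

End StepIntegral.

Section ScaledFloor.
Variables (R : realType) (x : R).
Hypothesis x_gt0 : 0 < x.

Definition divx (p : R) : int := Num.floor (p / x).
Definition modx (p : R) : R := p - (divx p)%:~R * x.

Lemma divx_bound p : (divx p)%:~R * x <= p < (divx p)%:~R * x + x.
Proof.
have /andP[le_fl lt_fl] := floor_itv (p / x).
rewrite intrD ltr_pdivrMr // mulrDl mul1r in lt_fl.
by rewrite -ler_pdivlMr // le_fl.
Qed.

Lemma modx_ge0 p : 0 <= modx p.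
Proof. by have := divx_bound p; rewrite /modx; lra. Qed.

Lemma modx_lt p : modx p < x.
Proof. by have := divx_bound p; rewrite /modx; lra. Qed.

Lemma ler_divx : {homo divx : p q / p <= q}.
Proof. by move=> p q le_pq; apply: le_floor; rewrite ler_pM2r ?invr_gt0. Qed.

Lemma divx_sub p t : 0 < t <= x -> divx (p - t) = if modx p < t then divx p - 1 else divx p.
Proof.
move=> /andP[t_gt0 le_tx]; apply: floor_def; have /andP[lo hi] := divx_bound p.
rewrite ler_pdivlMr // ltr_pdivrMr // /modx.
by case: ltP => ?; rewrite ?(intrB, intrD, mulrDl, mulrBl, mul1r); lra.
Qed.

Section LayerCake.
Variable U : seq R.
Hypotheses (U_uniq : uniq U) (U0 : 0 \in U) (xU : x \in U).
Hypothesis U_bnd : forall t, t \in U -> 0 <= t <= x.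

(* Layer-cake formula: as t runs over (0, x], the points pa - t and pb - t lie in
   the same cell [k x, (k + 1) x) for a set of t of measure (x - (pb - pa))^+. *)
Lemma stepint_eq_divx pa pb : pa <= pb -> modx pa \in U -> modx pb \in U ->
  stepint U (fun t => indicator (divx (pa - t) == divx (pb - t))) = pos_part (x - (pb - pa)).
Proof.
move=> le_ab faU fbU; have le_divx := ler_divx le_ab.
have U_ge0 t : t \in U -> 0 <= t by case/U_bnd/andP.
have int_le := stepint_le U_uniq U0 U_ge0.
have [a_ge0 a_lt] := (modx_ge0 pa, modx_lt pa); have [b_ge0 b_lt] := (modx_ge0 pb, modx_lt pb).
have diffE : pb - pa = (divx pb - divx pa)%:~R * x + (modx pb - modx pa).
  by rewrite /modx intrB; ring.
have pointwise G : (forall t, 0 < t <= x -> indicator (divx (pa - t) == divx (pb - t)) = G t) ->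
    stepint U (fun t => indicator (divx (pa - t) == divx (pb - t))) = stepint U G.
  by move=> eqG; apply: eq_stepint => t /U_bnd/andP[_ le_tx] t_gt0; rewrite eqG ?t_gt0.
have [dq|[dq|dq]] : divx pb = divx pa \/ divx pb = divx pa + 1 \/ divx pa + 2 <= divx pb by lia.
- rewrite dq subrr mul0r add0r in diffE; rewrite diffE pos_part_id; last lra.
  rewrite (pointwise (fun t => indicator (t <= modx pa) + indicator (t <= x) - indicator (t <= modx pb))).
    by rewrite stepintB stepintD !int_le //; ring.
  move=> t /andP[t_gt0 le_tx]; rewrite !divx_sub ?t_gt0 // dq /indicator le_tx !(leNgt t).
  by case: (ltP (modx pa) t); case: (ltP (modx pb) t); case: eqP => E /= *;
    try (exfalso; clear -E; lia); lra.
- rewrite dq addrAC subrr add0r mul1r in diffE; rewrite diffE.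
  have [le_ba|lt_ab] := leP (modx pb) (modx pa); last first.
    rewrite pos_part_eq0; last lra.
    rewrite (pointwise (fun=> 0)) ?stepint0 // => t /andP[t_gt0 le_tx].
    rewrite !divx_sub ?t_gt0 // dq /indicator.
    by case: (ltP (modx pa) t); case: (ltP (modx pb) t); case: eqP => E /= *;
      try (exfalso; clear -E; lia); lra.
  rewrite pos_part_id; last lra.
  rewrite (pointwise (fun t => indicator (t <= modx pa) - indicator (t <= modx pb))).
    by rewrite stepintB !int_le //; ring.
  move=> t /andP[t_gt0 le_tx]; rewrite !divx_sub ?t_gt0 // dq /indicator !(leNgt t).
  by case: (ltP (modx pa) t); case: (ltP (modx pb) t); case: eqP => E /= *;
    try (exfalso; clear -E; lia); lra.
- have le_cells : (divx pa)%:~R * x + 2 * x <= (divx pb)%:~R * x :> R.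
    by rewrite -mulrDl ler_pM2r // -[2]/(2%:~R) -intrD ler_int.
  rewrite pos_part_eq0; last by rewrite diffE intrB; lra.
  rewrite (pointwise (fun=> 0)) ?stepint0 // => t /andP[t_gt0 le_tx].
  rewrite !divx_sub ?t_gt0 //.
  by case: (ltP (modx pa) t); case: (ltP (modx pb) t); case: eqP => E //; exfalso; clear -E dq; lia.
Qed.

End LayerCake.
End ScaledFloor.

Section PartialSums.
Variables (R : realType) (n : nat).
Implicit Types (x : R) (w : 'I_n -> R).

Definition psum w (a : nat) : R := \sum_(i < n | (i < a)%N) w i.

Lemma sum_itv_psum w (l k : nat) : (l <= k)%N ->
  \sum_(i < n | (l <= i <= k)%N) w i = psum w k.+1 - psum w l.
Proof.
move=> le_lk; apply/eqP; rewrite eq_sym subr_eq addrC /psum (bigID (fun i : 'I_n => (i < l)%N)) /=.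
by apply/eqP; congr (_ + _); apply: eq_bigl => i /=; rewrite ?ltnS -?leqNgt; lia.
Qed.

Lemma fobj_psum x w : fobj x w =
  \sum_(l < n) \sum_(k < n | (l <= k)%N) pos_part (x - (psum w k.+1 - psum w l)).
Proof. by apply: eq_bigr => l _; apply: eq_bigr => k le_lk; rewrite sum_itv_psum. Qed.

Lemma eq_fobj x w w' : (forall i, w i = w' i) -> fobj x w = fobj x w'.
Proof.
move=> eq_w; apply: eq_bigr => l _; apply: eq_bigr => k _.
by congr (pos_part (_ - _)); apply: eq_bigr => i _.
Qed.

Section Nonneg.
Variable w : 'I_n -> R.
Hypothesis w_ge0 : forall i, 0 <= w i.

Lemma psum_ge0 a : 0 <= psum w a.
Proof. exact: sumr_ge0. Qed.

Lemma ler_psum : {homo psum w : a b / (a <= b)%N >-> a <= b}.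
Proof.
move=> a b le_ab; rewrite /psum [leRHS](bigID (fun i : 'I_n => (i < a)%N)) /=.
rewrite [X in _ <= X + _](eq_bigl (fun i : 'I_n => (i < a)%N)) => [|i].
  by rewrite lerDl sumr_ge0.
by apply: andb_idl => lt_ia; exact: leq_trans lt_ia le_ab.
Qed.

Lemma psum_le_sum a : psum w a <= \sum_(i < n) w i.
Proof. by rewrite [leRHS](bigID (fun i : 'I_n => (i < a)%N)) /= lerDl sumr_ge0. Qed.

End Nonneg.

Lemma psum_n w : psum w n = \sum_(i < n) w i.
Proof. by apply: eq_bigl => i; rewrite ltn_ord. Qed.

End PartialSums.

Lemma absz_addr1_lt (z : int) (K : nat) : -1 <= z -> z < K%:Z -> (absz (z + 1)%R < K.+1)%N.
Proof. by move=> z_ge z_lt; rewrite -ltz_nat gez0_abs; lia. Qed.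

Lemma eq_absz_addr1 (z1 z2 : int) : -1 <= z1 -> -1 <= z2 ->
  (absz (z1 + 1)%R == absz (z2 + 1)%R)%N = (z1 == z2).
Proof.
by move=> z1_ge z2_ge; rewrite -eqz_nat !gez0_abs; try lia; apply/eqP/eqP; lia.
Qed.

Definition opt_value (R : realType) (n m : nat) (x r : R) : R :=
  r * min_eq_pairs R n.+1 m.+2 (n.+1 %/ m.+2) + (x - r) * min_eq_pairs R n.+1 m.+1 (n.+1 %/ m.+1).

Section LowerBound.
Variables (R : realType) (x : R) (n : nat) (w : 'I_n -> R).
Hypotheses (x_gt0 : 0 < x) (w_ge0 : forall i, 0 <= w i).

(* Index of the cell of length x containing [psum w a - t], shifted to start at 0. *)
Definition cell_index (t : R) (a : nat) : nat := absz (divx x (psum w a - t) + 1).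

Lemma divx_psum_ge t a : t <= x -> -1 <= divx x (psum w a - t).
Proof.
move=> le_tx; rewrite /divx floor_ge_int ler_pdivlMr //.
by have := psum_ge0 w_ge0 a; rewrite mulN1r; lra.
Qed.

Lemma cell_index_lt t (K : nat) : t <= x ->
  (forall a, psum w a - t < K%:R * x) -> forall a, (cell_index t a < K.+1)%N.
Proof.
move=> le_tx lt_K a; apply: absz_addr1_lt; first exact: divx_psum_ge.
by rewrite /divx floor_lt_int ltr_pdivrMr.
Qed.

Lemma eq_cell_index t l k : t <= x ->
  (cell_index t l == cell_index t k) = (divx x (psum w l - t) == divx x (psum w k - t)).
Proof. by move=> le_tx; rewrite eq_absz_addr1 ?divx_psum_ge. Qed.

Lemma min_eq_pairs_le_cells t (K q : nat) : t <= x ->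
  (forall a, psum w a - t < K%:R * x) -> min_eq_pairs R n.+1 K.+1 q <= (eq_pairs (cell_index t) n)%:R.
Proof. by move=> le_tx lt_K; apply: min_eq_pairs_le => a _; exact: cell_index_lt. Qed.

Lemma fobj_stepint U : uniq U -> 0 \in U -> x \in U -> (forall t, t \in U -> 0 <= t <= x) ->
  (forall a, (a <= n)%N -> modx x (psum w a) \in U) ->
  fobj x w = stepint U (fun t => (eq_pairs (cell_index t) n)%:R).
Proof.
move=> U_uniq U0 xU U_bnd modxU; rewrite fobj_psum /eq_pairs.
rewrite (@eq_stepint _ _ _ (fun t => \sum_(l < n) \sum_(k < n | (l <= k)%N)
   indicator (divx x (psum w l - t) == divx x (psum w k.+1 - t)))) => [|t /U_bnd/andP[_ le_tx] _].
  rewrite stepint_sum; apply: eq_bigr => l _; rewrite stepint_sum; apply: eq_bigr => k le_lk.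
  by rewrite stepint_eq_divx // ?modxU ?ler_psum // ltnW.
rewrite natr_sum; apply: eq_bigr => l _; rewrite natr_sum; apply: eq_bigr => k _.
by rewrite eq_cell_index.
Qed.

End LowerBound.

Lemma opt_value_le_fobj (R : realType) n m (x v r : R) (w : 'I_n -> R) :
  0 < x -> 0 <= r < x -> v = m%:R * x + r -> Lambda v w -> opt_value n m x r <= fobj x w.
Proof.
move=> x_gt0 /andP[r_ge0 lt_rx] vE [w_ge0 sum_w].
have psum_le a : psum w a <= v by rewrite -sum_w psum_le_sum.
pose U := undup ([:: 0; x; r] ++ [seq modx x (psum w a) | a <- iota 0 n.+1]).
have U_bnd t : t \in U -> 0 <= t <= x.
  rewrite mem_undup mem_cat => /orP[|/mapP[a _ ->]]; last by rewrite modx_ge0 // ltW // modx_lt.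
  by rewrite !inE => /or3P[]/eqP->; rewrite ?lexx ?r_ge0 ltW.
have U_ge0 t : t \in U -> 0 <= t by case/U_bnd/andP.
have inU t : t \in [:: 0; x; r] -> t \in U by rewrite mem_undup mem_cat => ->.
rewrite (@fobj_stepint _ _ _ _ x_gt0 w_ge0 U) ?undup_uniq ?inU ?inE ?eqxx ?orbT //; last first.
  move=> a le_an; rewrite mem_undup mem_cat; apply/orP; right.
  by apply/mapP; exists a; rewrite // mem_iota.
rewrite /opt_value; set M2 := min_eq_pairs R n.+1 m.+2 _; set M1 := min_eq_pairs R n.+1 m.+1 _.
have -> : r * M2 + (x - r) * M1 =
    stepint U (fun t => M2 * indicator (t <= r) + M1 * (indicator (t <= x) - indicator (t <= r))).
  by rewrite stepintD !stepintZ stepintB !stepint_le ?undup_uniq ?inU ?inE ?eqxx ?orbT //; ring.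
apply: ler_stepint => t /U_bnd/andP[_ le_tx] t_gt0; rewrite /indicator le_tx.
have [le_tr|lt_rt] := leP t r; rewrite /= ?(mulr1, mulr0, addr0, add0r, subrr, subr0).
- apply: min_eq_pairs_le_cells => // a.
  by have := psum_le a; rewrite -addn1 natrD mulrDl mul1r; lra.
- by apply: min_eq_pairs_le_cells => // a; have := psum_le a; lra.
Qed.

Section Convexity.
Variables (R : realType) (n : nat).

Lemma pos_part_sum_le (I : finType) (lam t : I -> R) : (forall j, 0 <= lam j) ->
  pos_part (\sum_j lam j * t j) <= \sum_j lam j * pos_part (t j).
Proof.
move=> lam_ge0; rewrite /pos_part ge_max; apply/andP; split.
  by apply: ler_sum => j _; rewrite ler_wpM2l // le_max lexx.
by apply: sumr_ge0 => j _; rewrite mulr_ge0 // le_max lexx orbT.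
Qed.

Lemma fobj_convex (x : R) (I : finType) (lam : I -> R) (q : I -> 'I_n -> R) :
  (forall j, 0 <= lam j) -> \sum_j lam j = 1 ->
  fobj x (fun i => \sum_j lam j * q j i) <= \sum_j lam j * fobj x (q j).
Proof.
move=> lam_ge0 sum_lam; rewrite /fobj.
under [leRHS]eq_bigr do rewrite mulr_sumr; rewrite exchange_big; apply: ler_sum => l _.
under [leRHS]eq_bigr do rewrite mulr_sumr; rewrite exchange_big; apply: ler_sum => k _.
apply: le_trans (pos_part_sum_le _ lam_ge0); rewrite le_eqVlt; apply/orP; left; apply/eqP.
congr pos_part; under [RHS]eq_bigr do rewrite mulrBr mulr_sumr.
by rewrite sumrB -mulr_suml sum_lam mul1r [in RHS]exchange_big.
Qed.

End Convexity.

Section MarkedVectors.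
Variables (R : realType) (n p : nat) (d : nat -> nat).

Lemma psum_marked_vec (c : R) a :
  psum (marked_vec (n := n) p d c) a = c * (marks_before n p d a)%:R.
Proof.
rewrite /psum /marks_before natr_sum mulr_sumr big_mkcond /=; apply: eq_bigr => i _.
by rewrite /marked_vec; case: (i < a)%N; case: marked; rewrite ?mulr1 ?mulr0.
Qed.

(* Two partial sums of [marked_vec p d x] are equal or at least x apart, so each term
   of f is x or 0 according as the two prefixes contain the same number of marks. *)
Lemma fobj_marked_vec (x : R) : 0 < x ->
  fobj x (marked_vec (n := n) p d x) = x * (eq_pairs (marks_before n p d) n)%:R.
Proof.
move=> x_gt0; rewrite fobj_psum /eq_pairs natr_sum mulr_sumr; apply: eq_bigr => l _.
rewrite natr_sum mulr_sumr; apply: eq_bigr => k le_lk; rewrite !psum_marked_vec.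
have := leq_marks_before n p d (leqW le_lk).
case: eqVneq => [->|neq] le_marks; first by rewrite subrr subr0 pos_part_id ?mulr1 // ltW.
have : (marks_before n p d l + 1 <= marks_before n p d k.+1)%N by rewrite addn1 ltn_neqAle neq.
rewrite -(ler_nat R) natrD => /(ler_wpM2l (ltW x_gt0)); rewrite mulrDr mulr1 => lt_marks.
by rewrite mulr0 pos_part_eq0 //; lra.
Qed.

Hypotheses (gaps : valid_gaps n p d) (p_le_n : (p <= n)%N).

Lemma fobj_marked_vec_min (x : R) : 0 < x ->
  fobj x (marked_vec (n := n) p d x) = x * min_eq_pairs R n.+1 p.+1 (n.+1 %/ p.+1).
Proof.
move=> x_gt0; rewrite fobj_marked_vec // -(@min_eq_pairsE R (marks_before n p d) n p.+1 (n.+1 %/ p.+1)) //.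
  exact: marks_before_lt.
by move=> c lt_cp; rewrite level_size_marks_before //; have [/(_ c lt_cp)[]->] := gaps; [left|right].
Qed.

Lemma sum_marked_vec (c : R) : \sum_(i < n) marked_vec (n := n) p d c i = c * p%:R.
Proof. by rewrite -psum_n psum_marked_vec marks_before_n. Qed.

End MarkedVectors.

Section DuoEquidistant.
Variables (R : realType) (n m : nat) (x r : R).
Hypotheses (x_gt0 : 0 < x) (r_ge0 : 0 <= r) (le_rx : r <= x) (lt_mn : (m < n)%N).

Lemma Gamma_Lambda (w : 'I_n -> R) : Gamma m (x - r) r w -> Lambda (m%:R * x + r) w.
Proof.
move=> [dy [dr [gaps_y gaps_r wE]]]; split=> [i|].
  by rewrite wE /marked_vec addr_ge0 //; case: marked; rewrite // subr_ge0.
under eq_bigr do rewrite wE.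
rewrite big_split /= (sum_marked_vec gaps_y (ltnW lt_mn)) (sum_marked_vec gaps_r lt_mn).
by rewrite -addn1 natrD; ring.
Qed.

(* w = (y/x) u_y + (r/x) u_r, where u_y and u_r are the two equidistant parts of w
   rescaled to marks of height x. *)
Lemma fobj_Gamma_le (w : 'I_n -> R) : Gamma m (x - r) r w -> fobj x w <= opt_value n m x r.
Proof.
move=> [dy [dr [gaps_y gaps_r wE]]]; have x_neq0 : x != 0 by rewrite gt_eqF.
pose lam (b : bool) := if b then (x - r) / x else r / x.
pose q (b : bool) := if b then marked_vec (n := n) m dy x else marked_vec m.+1 dr x.
rewrite (@eq_fobj _ _ _ _ (fun i => \sum_b lam b * q b i)) => [|i]; last first.
  rewrite big_bool /= wE /marked_vec.
  by case: marked; case: marked; rewrite ?mulr0 ?divfK ?addr0 ?add0r.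
apply: le_trans (@fobj_convex _ _ x _ lam q _ _) _.
- by case; rewrite divr_ge0 ?subr_ge0 // ltW.
- by rewrite big_bool /= -mulrDl subrK divff.
rewrite big_bool /= (fobj_marked_vec_min gaps_y (ltnW lt_mn) x_gt0).
rewrite (fobj_marked_vec_min gaps_r lt_mn x_gt0) /opt_value !mulrA !divfK //.
by rewrite addrC.
Qed.

End DuoEquidistant.

Section ConvexHull.
Variables (R : realType) (n : nat) (S : ('I_n -> R) -> Prop).

Lemma conv_hull_Lambda v w : (forall u, S u -> Lambda v u) -> conv_hull S w -> Lambda v w.
Proof.
move=> SL [k [lam [q [lam_ge0 sum_lam Sq wE]]]]; split=> [i|].
  by rewrite wE sumr_ge0 // => j _; rewrite mulr_ge0 //; case: (SL _ (Sq j)).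
under eq_bigr do rewrite wE; rewrite exchange_big /=.
under eq_bigr => j _ do rewrite -mulr_sumr (proj2 (SL _ (Sq j))).
by rewrite -mulr_suml sum_lam mul1r.
Qed.

Lemma fobj_conv_hull_le x c w : (forall u, S u -> fobj x u <= c) -> conv_hull S w -> fobj x w <= c.
Proof.
move=> Sf [k [lam [q [lam_ge0 sum_lam Sq wE]]]].
rewrite (eq_fobj _ wE); apply: le_trans (fobj_convex _ _ lam_ge0 sum_lam) _.
rewrite -[leRHS]mul1r -sum_lam mulr_suml; apply: ler_sum => j _.
by rewrite ler_wpM2l ?Sf.
Qed.

End ConvexHull.

Theorem mainTheorem2 (R : realType) (n : nat) (x v : R) :
  (1 <= n)%N -> 0 < x -> 0 < v -> v < n%:R * x ->
  let m : nat := `|Num.floor (v / x)|%N in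
  let r : R := v - m%:R * x in
  let y : R := x - r in
  forall w : 'I_n -> R, conv_hull (@Gamma R n m y r) w ->
    Lambda v w /\ (forall u : 'I_n -> R, Lambda v u -> fobj x w <= fobj x u).
Proof.
move=> _ x_gt0 v_gt0 lt_v_nx m r y w w_hull.
have mE : m%:R = (divx x v)%:~R :> R.
  by rewrite natr_absz ger0_norm // floor_ge0 divr_ge0 // ltW.
have r_ge0 : 0 <= r by rewrite /r mE modx_ge0.
have lt_rx : r < x by rewrite /r mE modx_lt.
have vE : v = m%:R * x + r by rewrite /r subrKC.
have lt_mn : (m < n)%N by rewrite -(ltr_nat R) -(ltr_pM2r x_gt0); lra.
have Gamma_Lambda_v (u : 'I_n -> R) : Gamma m y r u -> Lambda v u.
  by rewrite [X in Lambda X]vE; apply: Gamma_Lambda => //; exact: ltW lt_rx.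
split; first exact: conv_hull_Lambda Gamma_Lambda_v w_hull.
have r_itv : 0 <= r < x by rewrite r_ge0.
move=> u u_Lambda; apply: (le_trans _ (opt_value_le_fobj x_gt0 r_itv vE u_Lambda)).
apply: fobj_conv_hull_le w_hull => q; apply: fobj_Gamma_le => //; exact: ltW lt_rx.
Qed.
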